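(* Let $E,E'$ be Stone spaces and let $\Phi\colon\mathscr{C}(E)\to\mathscr{C}(E')$ be a graph isomorphism. Then for every pants decomposition $\Gamma$ of $E$, the set $\Phi(\Gamma)$ is a pants decomposition of $E'$, and $\Phi$ restricts to a graph isomorphism $A(\Gamma)\to A(\Phi(\Gamma))$.
   Context: A Stone space is a compact, Hausdorff, totally disconnected space. A cut of $E$ is an unordered partition of $E$ into two disjoint clopen sets $U,V$, written $U\sqcup V$; it is non-peripheral if each of $U,V$ contains at least two points. Two cuts $U\sqcup V$, $U'\sqcup V'$ cross if all four sets $U\cap U'$, $U\cap V'$, $V\cap U'$, $V\cap V'$ are nonempty; otherwise they are compatible. The complex of cuts $\mathscr{C}(E)$ is the simplicial graph whose vertices are the non-peripheral cuts, with edges between distinct compatible cuts. A pants decomposition of $E$ is a countable collection $\Gamma$ of non-peripheral cuts such that: (1) any two cuts in $\Gamma$ are compatible; (2) every non-peripheral cut $\gamma\notin\Gamma$ crosses some cut of $\Gamma$; (3) every non-peripheral cut $\gamma\notin\Gamma$ crosses only finitely many cuts of $\Gamma$. Two cuts $\gamma_i,\gamma_j\in\Gamma$ are adjacent in $\Gamma$ if there is a non-peripheral cut $\gamma$ crossing $\gamma_i$ and $\gamma_j$ and no other cut of $\Gamma$. The adjacency graph $A(\Gamma)$ is the simplicial graph with vertex set $\Gamma$ and an edge between $\gamma_i$ and $\gamma_j$ whenever they are adjacent in $\Gamma$. *)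

From mathcomp Require Import all_boot all_order.
From mathcomp Require Import all_classical all_reals all_analysis.
Set Implicit Arguments. Unset Strict Implicit. Unset Printing Implicit Defensive.
Local Open Scope classical_set_scope.

Definition stone_space (T : topologicalType) : Prop :=
  compact [set: T] /\ hausdorff_space T /\ totally_disconnected [set: T].

Definition two_points {T : Type} (A : set T) : Prop :=
  exists x y, x <> y /\ A x /\ A y.

(* A non-peripheral cut U ⊔ V, represented as the unordered pair {U, V}
   (a set of two sets) with V = complement of U, U clopen, and each of
   U, V containing at least two points. *)
Definition is_npcut {T : topologicalType} (C : set (set T)) : Prop :=
  exists U : set T, clopen U /\ two_points U /\ two_points (~` U) /\
    C = [set U; ~` U].

Definition npcut (T : topologicalType) := {C : set (set T) | is_npcut C}.

Definition cross {T : topologicalType} (c d : npcut T) : Prop :=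
  forall A B, proj1_sig c A -> proj1_sig d B -> (A `&` B) !=set0.

Definition compatible {T : topologicalType} (c d : npcut T) : Prop :=
  ~ cross c d.

Definition cc_edge {T : topologicalType} (c d : npcut T) : Prop :=
  c <> d /\ compatible c d.

Definition cc_graph_iso {T T' : topologicalType} (Phi : npcut T -> npcut T') : Prop :=
  bijective Phi /\ forall c d, cc_edge c d <-> cc_edge (Phi c) (Phi d).

Definition pants_decomposition {T : topologicalType} (G : set (npcut T)) : Prop :=
  countable G /\
  (forall c d, G c -> G d -> compatible c d) /\
  (forall g, ~ G g -> exists2 c, G c & cross g c) /\
  (forall g, ~ G g -> finite_set [set c | G c /\ cross g c]).

Definition adjacent_in {T : topologicalType} (G : set (npcut T)) (gi gj : npcut T) : Prop :=
  G gi /\ G gj /\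
  exists g : npcut T, cross g gi /\ cross g gj /\
    (forall c, G c -> cross g c -> c = gi \/ c = gj).

Definition adj_edge {T : topologicalType} (G : set (npcut T)) (gi gj : npcut T) : Prop :=
  gi <> gj /\ adjacent_in G gi gj.

From mathcomp Require Import all_boot all_order.
From mathcomp Require Import all_classical all_reals all_analysis.
Set Implicit Arguments.
Unset Strict Implicit.
Local Open Scope classical_set_scope.

(* Two distinct cuts cross exactly when they are not adjacent in the complex
   of cuts, and no cut crosses itself; so a graph isomorphism preserves and
   reflects crossing.  Pants decompositions and adjacency are defined through
   crossing alone, hence are transported along any crossing-preserving
   bijection. *)

Lemma cross_irrefl (T : topologicalType) (c : npcut T) : ~ cross c c.
Proof.
rewrite /cross; have [U [_ [_ [_ ->]]]] := proj2_sig c.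
by move=> /(_ U (~` U) (or_introl erefl) (or_intror erefl)) [x []].
Qed.

Lemma cc_graph_iso_cross (T T' : topologicalType) (Phi : npcut T -> npcut T') :
  cc_graph_iso Phi -> forall c d, cross c d <-> cross (Phi c) (Phi d).
Proof.
move=> [[g PhiK _] edgeP] c d.
have [<-|neq_cd] := pselect (c = d).
  by split=> /cross_irrefl.
have neq_Phi : Phi c <> Phi d by move=> /(can_inj PhiK).
have [edge_Phi edge_c] := edgeP c d.
split=> cross_cd; apply: contrapT => ncross.
- by have [_] := edge_c (conj neq_Phi ncross).
- by have [_] := edge_Phi (conj neq_cd ncross).
Qed.

Section CrossingIsomorphism.
Variables (T T' : topologicalType) (f : npcut T -> npcut T') (g : npcut T' -> npcut T).
Hypotheses (fK : cancel f g) (gK : cancel g f).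
Hypothesis cross_f : forall c d, cross c d <-> cross (f c) (f d).

Let f_inj : injective f := can_inj fK.

Lemma cross_canl h c : cross (g h) c <-> cross h (f c).
Proof. by have := cross_f (g h) c; rewrite gK. Qed.

Lemma notin_image_can (G : set (npcut T)) h : ~ (f @` G) h -> ~ G (g h).
Proof. by apply: contra_not => Ggh; exists (g h). Qed.

Lemma crossing_image (G : set (npcut T)) h :
  [set c | (f @` G) c /\ cross h c] = f @` [set c | G c /\ cross (g h) c].
Proof.
apply/seteqP; split.
- by move=> _ [[c Gc <-] /cross_canl hc]; exists c.
- by move=> _ [c [Gc /cross_canl hc] <-]; split=> //; exists c.
Qed.

Lemma pants_decomposition_image (G : set (npcut T)) :
  pants_decomposition G -> pants_decomposition (f @` G).
Proof.
move=> [countG [compatG [coverG finG]]]; split; [|split; [|split]].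
- exact: card_le_trans (card_image_le _ _) countG.
- by move=> _ _ [c Gc <-] [d Gd <-] /cross_f; apply: compatG.
- move=> h /notin_image_can /coverG [c Gc /cross_canl hc].
  by exists (f c) => //; exists c.
- by move=> h /notin_image_can /finG fin_h; rewrite crossing_image; apply: finite_image.
Qed.

Lemma adjacent_in_image (G : set (npcut T)) gi gj :
  adjacent_in G gi gj <-> adjacent_in (f @` G) (f gi) (f gj).
Proof.
rewrite /adjacent_in !image_inj //; split.
- move=> [Gi [Gj [h [hi [hj onlyh]]]]]; split=> //; split=> //.
  exists (f h); split; first exact/cross_f.
  split; first exact/cross_f.
  by move=> _ [c Gc <-] /cross_f /(onlyh c Gc) [->|->]; [left|right].
- move=> [Gi [Gj [h [hi [hj onlyh]]]]]; split=> //; split=> //.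
  exists (g h); split; first exact/cross_canl.
  split; first exact/cross_canl.
  move=> c Gc /cross_canl hc.
  by case: (onlyh (f c) _ hc) => [|/f_inj->|/f_inj->]; [exists c|left|right].
Qed.

Lemma adj_edge_image (G : set (npcut T)) gi gj :
  adj_edge G gi gj <-> adj_edge (f @` G) (f gi) (f gj).
Proof.
rewrite /adj_edge adjacent_in_image.
by split=> -[neq adj]; split=> //; [move=> /f_inj | move=> eq; apply: neq; rewrite eq].
Qed.

End CrossingIsomorphism.

Theorem mainTheorem6 (E E' : topologicalType)
  (hE : stone_space E) (hE' : stone_space E')
  (Phi : npcut E -> npcut E') (hPhi : cc_graph_iso Phi) :
  forall G : set (npcut E), pants_decomposition G ->
    pants_decomposition (Phi @` G) /\
    (forall gi gj, G gi -> G gj ->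
       (adj_edge G gi gj <-> adj_edge (Phi @` G) (Phi gi) (Phi gj))).
Proof.
have cross_Phi := cc_graph_iso_cross hPhi.
have [[Psi PhiK PsiK] _] := hPhi.
move=> G pantsG; split; first exact: (pants_decomposition_image PsiK cross_Phi pantsG).
by move=> gi gj _ _; exact: (adj_edge_image PhiK PsiK cross_Phi G gi gj).
Qed.
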